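(* Let $L$ be a compact convex subset of $\mathbb{R}^n$, and let $Q$ be a polytope in $\mathbb{R}^n$ having at most $n$ vertices. If for every unit vector $u$ the projection $L_u$ contains a translate of $Q_u$, then $L$ contains a translate of $Q$.
   Context: For a unit vector $u$ and a set $S\subseteq\mathbb{R}^n$, $S_u$ denotes the orthogonal projection of $S$ onto the hyperplane $u^\perp$. *)

From HB Require Import structures.
From mathcomp Require Import all_boot all_order all_algebra.
From mathcomp Require Import all_classical all_reals all_analysis.
Set Implicit Arguments. Unset Strict Implicit. Unset Printing Implicit Defensive.
Import Order.TTheory GRing.Theory Num.Theory.
Import numFieldNormedType.Exports.
Local Open Scope ring_scope.
Local Open Scope classical_set_scope.

Section Defs.
Variables (R : realType) (n : nat).

Definition dotv (x y : 'rV[R]_n) : R := \sum_(i < n) x 0 i * y 0 i.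

Definition unit_vec (u : 'rV[R]_n) : Prop := dotv u u = 1.

(* orthogonal projection onto the hyperplane u^perp (u a unit vector) *)
Definition proj_perp (u x : 'rV[R]_n) : 'rV[R]_n := x - dotv x u *: u.

Definition proj_set (u : 'rV[R]_n) (S : set 'rV[R]_n) : set 'rV[R]_n :=
  proj_perp u @` S.

Definition conv_hull (k : nat) (v : 'I_k -> 'rV[R]_n) : set 'rV[R]_n :=
  [set x | exists w : 'I_k -> R, (forall i, 0 <= w i) /\
        \sum_(i < k) w i = 1 /\ x = \sum_(i < k) w i *: v i].

Definition translate (S : set 'rV[R]_n) (t : 'rV[R]_n) : set 'rV[R]_n :=
  [set x + t | x in S].

Definition contains_translate (A B : set 'rV[R]_n) : Prop :=
  exists t, translate B t `<=` A.

End Defs.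

From HB Require Import structures.
From mathcomp Require Import all_boot all_order all_algebra.
From mathcomp Require Import all_classical all_reals all_analysis.
From mathcomp Require Import ring lra zify.
Import Order.TTheory GRing.Theory Num.Theory.
Import numFieldNormedType.Exports.
Local Open Scope ring_scope.
Local Open Scope classical_set_scope.
Set Implicit Arguments.
Unset Strict Implicit.

(** Pick points X_0, ..., X_(k-1) of L minimising the spread
    sum_(i,j) |(X_i - v_i) - (X_j - v_j)|^2 of the offsets X_i - v_i
    (L^k is compact).  If the spread is positive, the at most k - 1 < n
    offset differences miss some unit vector u.  The hypothesis for u
    yields points l_i of L that differ from v_i + t only along u;
    moving every X_i towards l_i stays in L by convexity and changes
    every offset difference by a multiple of u orthogonal to it, so the
    spread becomes b^2 D + (1 - b)^2 E (D the minimal spread, E >= 0),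
    which is smaller than D for a suitable b.  Hence all offsets equal
    some t, i.e. v_i + t lies in L, and so does conv(v) + t. *)

Section InnerProduct.
Variables (R : realType) (n : nat).
Local Notation V := 'rV[R]_n.

Lemma dotvC (x y : V) : dotv x y = dotv y x.
Proof. by apply: eq_bigr => i _; rewrite mulrC. Qed.

Lemma dotvDl (x y z : V) : dotv (x + y) z = dotv x z + dotv y z.
Proof. by rewrite /dotv -big_split; apply: eq_bigr => i _; rewrite mxE mulrDl. Qed.

Lemma dotvZl a (x y : V) : dotv (a *: x) y = a * dotv x y.
Proof. by rewrite /dotv mulr_sumr; apply: eq_bigr => i _; rewrite mxE mulrA. Qed.

Lemma dotvBl (x y z : V) : dotv (x - y) z = dotv x z - dotv y z.
Proof. by rewrite dotvDl -scaleN1r dotvZl mulN1r. Qed.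

Lemma dotvDr (x y z : V) : dotv z (x + y) = dotv z x + dotv z y.
Proof. by rewrite dotvC dotvDl !(dotvC z). Qed.

Lemma dotvZr a (x y : V) : dotv y (a *: x) = a * dotv y x.
Proof. by rewrite dotvC dotvZl dotvC. Qed.

Lemma dotv_ge0 (x : V) : 0 <= dotv x x.
Proof. by apply: sumr_ge0 => i _; rewrite -expr2 sqr_ge0. Qed.

Lemma dotv_eq0 (x : V) : dotv x x = 0 -> x = 0.
Proof.
move=> /eqP; rewrite psumr_eq0 => [/allP x0|i _]; last by rewrite -expr2 sqr_ge0.
apply/rowP => j; rewrite mxE.
by have := x0 j (mem_index_enum _); rewrite /= mulf_eq0 orbb => /eqP.
Qed.

Lemma dotv_orth_unit_comb a c (x u : V) : dotv x u = 0 -> unit_vec u ->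
  dotv (a *: x + c *: u) (a *: x + c *: u) = a ^+ 2 * dotv x x + c ^+ 2.
Proof.
move=> xu uu; rewrite !dotvDl !dotvDr !dotvZl !dotvZr xu dotvC xu uu.
by rewrite !mulr0 addr0 add0r mulr1 !mulrA -!expr2.
Qed.

Lemma exists_unit_orthogonal m (a : 'I_m -> V) : (m < n)%N ->
  exists2 u, unit_vec u & forall i, dotv (a i) u = 0.
Proof.
move=> mn; pose A : 'M[R]_(m, n) := \matrix_(i, j) a i 0 j.
have [i Ki|K0] := pickP (fun i => row i (kermx A^T) != 0); last first.
  have : kermx A^T = 0 by apply/row_matrixP => i; rewrite row0; apply/eqP/negbFE/K0.
  move=> /(congr1 mxrank); rewrite mxrank_ker mxrank_tr mxrank0 => rA.
  by have := rank_leq_row A; lia.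
set r := row i _ in Ki.
have rA : r *m A^T = 0 by rewrite /r -row_mul mulmx_ker row0.
have rr : 0 < dotv r r.
  by rewrite lt_def dotv_ge0 andbT; apply: contra Ki => /eqP/dotv_eq0 ->.
exists ((Num.sqrt (dotv r r))^-1 *: r) => [|j].
  rewrite /unit_vec dotvZl dotvZr mulrA -expr2 exprVn sqr_sqrtr ?ltW //.
  by rewrite mulVf ?gt_eqF.
rewrite dotvZr; have -> : dotv (a j) r = (r *m A^T) 0 j.
  by rewrite dotvC !mxE; apply: eq_bigr => l _; rewrite !mxE.
by rewrite rA mxE mulr0.
Qed.

End InnerProduct.

Section Convexity.
Variables (R : realType) (n : nat) (L : set 'rV[R]_n).
Hypothesis cvL : convex_set L.

Lemma convex_set_comb2 (x y : 'rV[R]_n) b : 0 <= b -> b <= 1 ->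
  L x -> L y -> L (b *: x + (1 - b) *: y).
Proof.
by move=> b0 b1 Lx Ly; have := @cvL x y (Itv01 b0 b1); rewrite !inE; apply.
Qed.

Lemma convex_set_sum k (w : 'I_k -> R) (p : 'I_k -> 'rV[R]_n) :
  (forall i, 0 <= w i) -> \sum_(i < k) w i = 1 -> (forall i, L (p i)) ->
  L (\sum_(i < k) w i *: p i).
Proof.
elim: k w p => [|k IHk] w p w0 w1 Lp.
  by move: w1; rewrite big_ord0 => /eqP; rewrite eq_sym oner_eq0.
move: w1; rewrite !big_ord_recr /=.
set w' := fun i => w (widen_ord (leqnSn k) i); set s := \sum_(i < k) w' i => w1.
have s0 : 0 <= s by apply: sumr_ge0 => i _; apply: w0.
have [s_eq0|s_neq0] := eqVneq s 0.
  have w'0 i : w' i = 0.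
    move/eqP: s_eq0; rewrite psumr_eq0 => [/allP w'0|j _]; last exact: w0.
    by apply/eqP/w'0/mem_index_enum.
  rewrite big1 ?add0r; last by move=> i _; rewrite -/(w' i) w'0 scale0r.
  by move: w1; rewrite s_eq0 add0r => ->; rewrite scale1r.
have -> : \sum_(i < k) w (widen_ord (leqnSn k) i) *: p (widen_ord (leqnSn k) i)
    = s *: \sum_(i < k) (w' i / s) *: p (widen_ord (leqnSn k) i).
  by rewrite scaler_sumr; apply: eq_bigr => i _; rewrite scalerA mulrCA divff ?mulr1.
have -> : w ord_max = 1 - s by lra.
apply: convex_set_comb2 => //; first by have := w0 ord_max; lra.
apply: IHk => [i||i]; last exact: Lp.
- by apply: divr_ge0 => //; apply: w0.
- by rewrite -mulr_suml divff.
Qed.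

Lemma translate_conv_hull_sub k (v : 'I_k -> 'rV[R]_n) t :
  (forall i, L (v i + t)) -> translate (conv_hull v) t `<=` L.
Proof.
move=> Lvt _ [_ [w [w0 [w1 ->]]] <-].
have -> : \sum_(i < k) w i *: v i + t = \sum_(i < k) w i *: (v i + t).
  rewrite -[t in LHS]scale1r -w1 scaler_suml -big_split.
  by apply: eq_bigr => i _; rewrite scalerDr.
exact: convex_set_sum.
Qed.

End Convexity.

Section Projection.
Variables (R : realType) (n : nat).
Local Notation V := 'rV[R]_n.

Lemma proj_perp_eqD (u x y t : V) : proj_perp u x = proj_perp u y + t ->
  x = y + t + (dotv x u - dotv y u) *: u.
Proof.
move=> e; rewrite -[x in LHS](subrK (dotv x u *: u)) -/(proj_perp u x) e.
by apply/rowP => c; rewrite !mxE; ring.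
Qed.

Lemma conv_hull_vertex k (v : 'I_k -> V) i : conv_hull v (v i).
Proof.
exists (fun j => (j == i)%:R); split; first by move=> j; rewrite ler0n.
split; first by rewrite (bigD1 i) //= eqxx big1 ?addr0 // => j /negbTE ->.
by rewrite (bigD1 i) //= eqxx scale1r big1 ?addr0 // => j /negbTE ->; rewrite scale0r.
Qed.

Lemma proj_translate_vertices (L : set V) k (v : 'I_k -> V) u :
  contains_translate (proj_set u L) (proj_set u (conv_hull v)) ->
  exists t, forall i, exists l, L l /\ l = v i + t + (dotv l u - dotv (v i) u) *: u.
Proof.
move=> [t vtL]; exists t => i.
have [|l Ll lv] := vtL (proj_perp u (v i) + t).
  by exists (proj_perp u (v i)) => //; exists (v i) => //; apply: conv_hull_vertex.
by exists l; split => //; apply: proj_perp_eqD.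
Qed.

End Projection.

Lemma le_sqr_interp_eq0 (R : realFieldType) (D E : R) : 0 <= D -> 0 <= E ->
  (forall b, 0 <= b -> b <= 1 -> D <= b ^+ 2 * D + (1 - b) ^+ 2 * E) -> D = 0.
Proof.
move=> D0 E0 Dmin; apply/eqP; rewrite eq_le D0 andbT leNgt; apply/negP => Dpos.
have DE : 0 < D + E by lra.
have b0 : 0 <= E / (D + E) by apply: divr_ge0; lra.
have b1 : E / (D + E) <= 1 by rewrite ler_pdivrMr //; lra.
have := Dmin _ b0 b1.
have -> : (E / (D + E)) ^+ 2 * D + (1 - E / (D + E)) ^+ 2 * E = D * E / (D + E).
  by field; rewrite gt_eqF.
rewrite ler_pdivlMr // => DDE.
have : D * D <= 0 by lra.
by rewrite leNgt mulr_gt0.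
Qed.

Section Spread.
Variables (R : realType) (n k : nat) (v : 'I_k -> 'rV[R]_n).
Local Notation V := 'rV[R]_n.
Local Notation points := (prod_topology (fun _ : 'I_k => V)).

Definition offset (X : 'I_k -> V) i := X i - v i.

Definition spread (X : points) : R :=
  \sum_(i < k) \sum_(j < k) dotv (offset X i - offset X j) (offset X i - offset X j).

Lemma spread_ge0 X : 0 <= spread X.
Proof. by apply: sumr_ge0 => i _; apply: sumr_ge0 => j _; apply: dotv_ge0. Qed.

Lemma spread_eq0 X : spread X = 0 -> forall i j, offset X i = offset X j.
Proof.
move=> /eqP; rewrite psumr_eq0 => [/allP X0 i j|i _]; last first.
  by apply: sumr_ge0 => j _; apply: dotv_ge0.
move: (X0 i (mem_index_enum _)); rewrite psumr_eq0 => [/allP/(_ j)|j' _].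
  by move=> /(_ (mem_index_enum _))/eqP/dotv_eq0/subr0_eq.
exact: dotv_ge0.
Qed.

Lemma continuous_spread : continuous spread.
Proof.
apply: continuous_big; first exact: add_continuous.
move=> i _; apply: continuous_big; first exact: add_continuous.
move=> j _; apply: continuous_big; first exact: add_continuous.
move=> l _ X.
have coord_cont : {for X, continuous (fun Y : points => (offset Y i - offset Y j) 0 l)}.
  apply: (@continuous_comp _ _ _ (fun Y : points => offset Y i - offset Y j)
    (fun M : V => M 0 l)); last exact: coord_continuous.
  by apply: continuousB; apply: continuousB;
    (try exact: proj_continuous); exact: cst_continuous.
exact: continuousM.
Qed.

Lemma spread_mix X b t u (s : 'I_k -> R) : unit_vec u ->
    (forall i j, dotv (offset X i - offset X j) u = 0) ->
  spread (fun i => b *: X i + (1 - b) *: (v i + t + s i *: u)) =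
  b ^+ 2 * spread X + (1 - b) ^+ 2 * \sum_(i < k) \sum_(j < k) (s i - s j) ^+ 2.
Proof.
move=> uu uX; rewrite /spread mulr_sumr mulr_sumr -big_split; apply: eq_bigr => i _.
rewrite mulr_sumr mulr_sumr -big_split; apply: eq_bigr => j _.
set Y := fun i => _; have -> : offset Y i - offset Y j =
    b *: (offset X i - offset X j) + ((1 - b) * (s i - s j)) *: u.
  by apply/rowP => c; rewrite !mxE; ring.
by rewrite dotv_orth_unit_comb // exprMn.
Qed.

Lemma exists_spread_min (L : set V) : compact L -> L !=set0 ->
  exists2 X : points, (forall i, L (X i)) &
    forall Y : points, (forall i, L (Y i)) -> spread X <= spread Y.
Proof.
move=> cpL [l Ll].
have cpLk : compact [set X : points | forall i, L (X i)].
  exact: (@tychonoff _ (fun _ : 'I_k => V) (fun=> L) (fun=> cpL)).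
have [|X LX Xmin] := compact_EVT_min _ cpLk (continuous_subspaceT continuous_spread).
  by exists (fun=> l).
exists X => [|Y LY]; first by rewrite inE in LX.
by apply: Xmin; rewrite inE.
Qed.

End Spread.

Lemma spread_min_eq0 (R : realType) (n k : nat) (v : 'I_k -> 'rV[R]_n)
    (L : set 'rV[R]_n) (X : 'I_k -> 'rV[R]_n) (u : 'rV[R]_n) :
  convex_set L -> (forall i, L (X i)) ->
  (forall Y, (forall i, L (Y i)) -> spread v X <= spread v Y) ->
  unit_vec u -> (forall i j, dotv (offset v X i - offset v X j) u = 0) ->
  (exists t, forall i, exists l, L l /\ l = v i + t + (dotv l u - dotv (v i) u) *: u) ->
  spread v X = 0.
Proof.
move=> cvL LX Xmin uu uX [t /choice[l lE]].
pose s i := dotv (l i) u - dotv (v i) u.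
apply: (le_sqr_interp_eq0 (spread_ge0 v X)
  (E := \sum_(i < k) \sum_(j < k) (s i - s j) ^+ 2)).
  by apply: sumr_ge0 => i _; apply: sumr_ge0 => j _; apply: sqr_ge0.
move=> b b0 b1; rewrite -(spread_mix b t s uu uX); apply: Xmin => i.
by rewrite -(lE i).2; apply: convex_set_comb2 (LX i) (lE i).1.
Qed.

Theorem lemma2p5 (R : realType) (n : nat) (L : set 'rV[R]_n)
  (k : nat) (v : 'I_k -> 'rV[R]_n) :
  compact L -> convex_set L -> (k <= n)%N ->
  (forall u : 'rV[R]_n, unit_vec u ->
     contains_translate (proj_set u L) (proj_set u (conv_hull v))) ->
  contains_translate L (conv_hull v).
Proof.
move=> cpL cvL kn hyp; case: k v kn hyp => [|k] v kn hyp.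
  by exists 0; apply: (translate_conv_hull_sub cvL) => -[].
have L0 : L !=set0.
  have [u0 u0u _] := exists_unit_orthogonal (fun _ : 'I_0 => 0 : 'rV[R]_n)
    (leq_ltn_trans (leq0n k) kn).
  have [t /(_ ord0) [l [Ll _]]] := proj_translate_vertices (hyp u0 u0u).
  by exists l.
have [X LX Xmin] := exists_spread_min v cpL L0.
pose z := offset v X.
have [u uu uz] := exists_unit_orthogonal (fun i => z (lift ord0 i) - z ord0) kn.
have zu i j : dotv (z i - z j) u = 0.
  have zu0 l : dotv (z l) u = dotv (z ord0) u.
    apply/eqP; rewrite -subr_eq0 -dotvBl.
    by case: (unliftP ord0 l) => [l' ->|->]; [rewrite uz | rewrite dotvBl subrr].
  by rewrite dotvBl !zu0 subrr.
have zE := spread_eq0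
  (spread_min_eq0 cvL LX Xmin uu zu (proj_translate_vertices (hyp u uu))).
exists (z ord0); apply: (translate_conv_hull_sub cvL) => i.
by rewrite /z -(zE i ord0) /offset addrC subrK.
Qed.
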